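(* $\mathbf{SC}(1,1)\subseteq\mathbf{SC}'(1,1)$.
   Context: For an alphabet $V$, $V^+=V^*-\{\lambda\}$, and $\mathit{alph}(w)$ is the set of symbols occurring in $w$. A semi-conditional grammar of degree $(1,1)$ is a quadruple $G=(N,T,P,S)$ where $N$ and $T$ are disjoint finite alphabets of nonterminals and terminals, $V=N\cup T$, $S\in N$, and $P$ is a finite set of productions $(A\to x,\mathit{Per},\mathit{For})$ with $A\in N$, $x\in V^+$ (no erasing productions), $\mathit{Per},\mathit{For}\subseteq V$, $|\mathit{Per}|\le1$, $|\mathit{For}|\le1$. Its language is $L(G)=\{w\in T^*:S\Rightarrow^*w\}$. $\mathbf{SC}(1,1)$ is the family of languages generated by such grammars when the derivation step $uAv\Rightarrow uxv$ ($u,v\in V^*$) by $(A\to x,\mathit{Per},\mathit{For})$ requires $\mathit{Per}\subseteq\mathit{alph}(uAv)$ and $\mathit{alph}(uAv)\cap\mathit{For}=\emptyset$. $\mathbf{SC}'(1,1)$ is the family of languages generated by such grammars when the derivation step instead requires $\mathit{Per}\subseteq\mathit{alph}(uv)$ and $\mathit{alph}(uv)\cap\mathit{For}=\emptyset$ (the rewritten occurrence of $A$ is not taken into account). *)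

From mathcomp Require Import all_boot.
Set Implicit Arguments. Unset Strict Implicit. Unset Printing Implicit Defensive.

(* Symbols of a grammar with nonterminal alphabet N and terminal alphabet T:
   V = N ∪ T as a disjoint sum (disjointness is built in). *)
Definition symbol (N T : finType) := (N + T)%type.

(* A production (A -> x, Per, For); Per, For are subsets of V of size <= 1,
   represented as options (None = empty set, Some a = {a}). *)
Definition production (N T : finType) :=
  (N * seq (symbol N T) * option (symbol N T) * option (symbol N T))%type.

Definition lhs N T (p : production N T) : N := p.1.1.1.
Definition rhs N T (p : production N T) : seq (symbol N T) := p.1.1.2.
Definition per N T (p : production N T) : option (symbol N T) := p.1.2.
Definition forb N T (p : production N T) : option (symbol N T) := p.2.

Record sc_grammar (N T : finType) := SCGrammar {
  prods : seq (production N T);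
  start : N;
  prods_nonerasing : all (fun p => rhs p != [::]) prods
}.

Definition per_ok N T (c : option (symbol N T)) (s : seq (symbol N T)) : bool :=
  if c is Some a then a \in s else true.
Definition forb_ok N T (c : option (symbol N T)) (s : seq (symbol N T)) : bool :=
  if c is Some b then b \notin s else true.

(* One derivation step u A v => u x v.
   primed = false : SC semantics, conditions checked on alph(uAv);
   primed = true  : SC' semantics, conditions checked on alph(uv). *)
Definition step (primed : bool) N T (G : sc_grammar N T)
    (w1 w2 : seq (symbol N T)) : Prop :=
  exists p u v,
    [/\ p \in prods G,
        w1 = u ++ inl (lhs p) :: v,
        w2 = u ++ rhs p ++ v &
        let ctx := if primed then u ++ v else u ++ inl (lhs p) :: v in
        per_ok (per p) ctx && forb_ok (forb p) ctx].

Inductive derives (primed : bool) N T (G : sc_grammar N T) :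
    seq (symbol N T) -> seq (symbol N T) -> Prop :=
  | derives_refl w : derives primed G w w
  | derives_step w1 w2 w3 :
      step primed G w1 w2 -> derives primed G w2 w3 -> derives primed G w1 w3.

Definition lang (primed : bool) N T (G : sc_grammar N T) (w : seq T) : Prop :=
  derives primed G [:: inl (start G)] (map inr w).

From mathcomp Require Import all_boot.
Set Implicit Arguments. Unset Strict Implicit. Unset Printing Implicit Defensive.

(* Under SC semantics the context of a step by (A -> x, Per, For) contains the
   rewritten occurrence of A itself, so a permitting condition {A} is always
   met, a forbidding condition {A} never is, and a condition on any other
   symbol is unaffected by that occurrence.  Hence dropping the productions
   that forbid their own left-hand side and erasing permitting conditions on
   the own left-hand side yields a grammar whose SC' steps are exactly the SC
   steps of the original one. *)

Lemma mem_cat_cons_other (S : eqType) (a b : S) u v : a != b ->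
  (a \in u ++ b :: v) = (a \in u ++ v).
Proof. by move=> neq_ab; rewrite !mem_cat in_cons (negbTE neq_ab). Qed.

Section Conditions.
Variables (T N : finType).
Local Notation S := (symbol N T).

Lemma per_ok_cat_cons_other (c : option S) b u v : c != Some b ->
  per_ok c (u ++ b :: v) = per_ok c (u ++ v).
Proof.
case: c => [a|] //= neq_ab.
by apply: mem_cat_cons_other; apply: contraNneq neq_ab => ->.
Qed.

Lemma forb_ok_cat_cons_other (c : option S) b u v : c != Some b ->
  forb_ok c (u ++ b :: v) = forb_ok c (u ++ v).
Proof.
case: c => [a|] //= neq_ab.
by rewrite mem_cat_cons_other //; apply: contraNneq neq_ab => ->.
Qed.

Lemma per_ok_cat_cons_self (b : S) u v : per_ok (Some b) (u ++ b :: v).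
Proof. by rewrite /= mem_cat in_cons eqxx orbT. Qed.

Lemma forb_ok_cat_cons_self (b : S) u v : forb_ok (Some b) (u ++ b :: v) = false.
Proof. by rewrite /= mem_cat in_cons eqxx orbT. Qed.

End Conditions.

Section PrimedSimulation.
Variables (T N : finType) (G : sc_grammar N T).

Definition forbids_own_lhs (p : production N T) : bool :=
  forb p == Some (inl (lhs p)).

Definition drop_self_permission (p : production N T) : production N T :=
  (lhs p, rhs p,
   if per p == Some (inl (lhs p)) then None else per p, forb p).

Lemma sc_conditionE (p : production N T) u v :
  per_ok (per p) (u ++ inl (lhs p) :: v) && forb_ok (forb p) (u ++ inl (lhs p) :: v)
  = ~~ forbids_own_lhs p &&
    (per_ok (per (drop_self_permission p)) (u ++ v)
     && forb_ok (forb (drop_self_permission p)) (u ++ v)).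
Proof.
rewrite /forbids_own_lhs /drop_self_permission /per /forb /=.
have [-> | neq_for] := eqVneq p.2; first by rewrite forb_ok_cat_cons_self andbF.
rewrite forb_ok_cat_cons_other //.
have [-> | neq_per] := eqVneq p.1.2; first by rewrite per_ok_cat_cons_self.
by rewrite per_ok_cat_cons_other.
Qed.

Definition primed_prods : seq (production N T) :=
  map drop_self_permission [seq p <- prods G | ~~ forbids_own_lhs p].

Lemma primed_prods_nonerasing : all (fun p => rhs p != [::]) primed_prods.
Proof.
rewrite all_map all_filter; apply: sub_all (prods_nonerasing G) => p.
by move=> nonerasing /=; rewrite implybE nonerasing orbT.
Qed.

Definition primed_grammar := SCGrammar (start G) primed_prods_nonerasing.

Lemma step_primed_grammar w1 w2 :
  step false G w1 w2 <-> step true primed_grammar w1 w2.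
Proof.
split.
- case=> p [u [v [p_in -> -> /=]]]; rewrite sc_conditionE => /andP[own ok].
  exists (drop_self_permission p), u, v; split => //.
  by rewrite map_f // mem_filter own.
- case=> q [u [v [/mapP[p] + -> -> -> /= ok]]]; rewrite mem_filter => /andP[own p_in].
  by exists p, u, v; split; rewrite //= sc_conditionE own.
Qed.

Lemma derives_primed_grammar w1 w2 :
  derives false G w1 w2 <-> derives true primed_grammar w1 w2.
Proof.
by split; elim=> [w | w1' w2' w3 st _ IH]; do ?exact: derives_refl;
  apply: derives_step IH; apply/step_primed_grammar.
Qed.

End PrimedSimulation.

Theorem corollary2 (T N : finType) (G : sc_grammar N T) :
  exists (N' : finType) (G' : sc_grammar N' T),
    forall w : seq T, lang false G w <-> lang true G' w.
Proof. by exists N, (primed_grammar G) => w; apply: derives_primed_grammar. Qed.
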